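(* Every series $P\in\mathcal R^+$ is congruent modulo $\mathfrak I_0$ to the characteristic series $S_X$ of some $X\in\mathbb W$. Consequently every $S\in\mathcal R$ can be written as $S=S_X-S_Y+S_0$ for suitable $X,Y\in\mathbb W$ and $S_0\in\mathfrak I_0$.
   Context: Let $\mathbb N=\{0,1,2,\dots\}$. $\mathbb{W}$ is the family of finitary point sets: sets $A\subseteq\bigcup_{k\ge1}\mathbb N^k$ of finite tuples of natural numbers such that for every $n\in\mathbb N$ there is $h$ with $A\cap\{0,\dots,n\}^k=\emptyset$ for all $k>h$. Let $t_0,t_1,\dots$ be countably many indeterminates; let $\mathbf A$ be the set of eventually zero sequences $\mathbf a=(a_0,a_1,\dots)$ of non-negative integers, and $t^{\mathbf a}=\prod_i t_i^{a_i}$. Formal series are $S=\sum_{\mathbf a\in\mathbf A}n_{\mathbf a}t^{\mathbf a}$ with $n_{\mathbf a}\in\mathbb Z$. $\mathcal R$ is the ring of those formal series $S$ for which there exist $d_n\in\mathbb N$ $(n\in\mathbb N)$ with $n_{\mathbf a}=0$ whenever $a_n>d_n$ for some $n$ (bounded degree $d_n$ in each variable $t_n$), and some $b\in\mathbb N$ with $|n_{\mathbf a}|\le b\,(\sum_i a_i)!/\prod_i a_i!$ for all $\mathbf a$. $\mathcal R^+$ is the set of nonzero series of $\mathcal R$ all of whose coefficients are non-negative (positive series). $\mathfrak I_0$ is the ideal of $\mathcal R$ generated by $\{t_n-1:n\in\mathbb N\}$. For a tuple $x=(x_1,\dots,x_d)$ let $t_x=t^{\mathbf a}$ where $a_i=|\{j:x_j=i\}|$.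 The characteristic series of $X\in\mathbb W$ is $S_X=\sum_{x\in X}t_x$ (the coefficient of $t^{\mathbf a}$ is the number of $x\in X$ with $t_x=t^{\mathbf a}$), with $S_\emptyset=0$. *)

From mathcomp Require Import all_boot all_order all_algebra.
Set Implicit Arguments. Unset Strict Implicit. Unset Printing Implicit Defensive.
Import Order.TTheory GRing.Theory Num.Theory.
Local Open Scope ring_scope.

(* Exponent vectors a in A (eventually zero sequences of naturals) are encoded
   as sorted (non-decreasing) lists of naturals, i.e. finite multisets of
   indices: the list s encodes the exponent a with a_i = count_mem i s, i.e.
   the monomial t^a = prod_{i in s} t_i.  This is a bijection between A and
   sorted lists.  The tuple x has t_x = t^(sort x). *)
Definition expo := seq nat.
Definition is_expo (s : expo) : bool := sorted leq s.

(* a formal series: its coefficient function; coefficients at non-exponent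
   (unsorted) lists are required to be 0 (normal form). *)
Definition series := expo -> int.

Definition multinom (s : expo) : nat :=
  ((size s)`! %/ \prod_(i <- undup s) (count_mem i s)`!)%N.

Definition in_R (S : series) : Prop :=
  [/\ (forall s, ~~ is_expo s -> S s = 0),
      (exists d : nat -> nat, forall s, is_expo s ->
          (exists n, (d n < count_mem n s)%N) -> S s = 0) &
      (exists b : nat, forall s, is_expo s -> `|S s| <= (b * multinom s)%:R)].

Definition in_Rplus (S : series) : Prop :=
  [/\ in_R S, (exists s, S s != 0) & (forall s, 0 <= S s)].

(* multiplication of a series by the variable t_n *)
Definition mulT (n : nat) (r : series) : series :=
  fun s => if is_expo s && (n \in s) then r (rem n s) else 0.

(* the ideal I_0 of R generated by {t_n - 1 : n in N}: finite R-linear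
   combinations of the generators *)
Definition in_I0 (S : series) : Prop :=
  exists l : seq (nat * series),
    (forall i, (i < size l)%N -> in_R (nth (0%N, fun _ => 0) l i).2) /\
    (forall s, S s = \sum_(p <- l) (mulT p.1 p.2 s - p.2 s)).

Definition in_W (X : pred (seq nat)) : Prop :=
  (forall x, X x -> x != [::]) /\
  (forall n : nat, exists h : nat, forall x, X x ->
      all (fun i => (i <= n)%N) x -> (size x <= h)%N).

(* characteristic series: coefficient of t^a = #{x in X | t_x = t^a};
   the x with t_x = t^s are exactly the (distinct) permutations of s *)
Definition charser (X : pred (seq nat)) : series :=
  fun s => if is_expo s then (count X (permutations s))%:Z else 0.

From mathcomp Require Import all_boot all_order all_algebra ring lra.
Import Order.TTheory GRing.Theory Num.Theory.
Set Implicit Arguments. Unset Strict Implicit. Unset Printing Implicit Defensive.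

(* Since [t_n] is congruent to [1] modulo [I_0], multiplying a positive series
   [P] by the monomial [t_0 t_1 ... t_b] does not change its class.  If the
   coefficients of [P] are bounded by [b] times the multinomial coefficients,
   the coefficient of [t^a] in the product is bounded by the multinomial
   coefficient of [a] itself, because appending [0, ..., b] to an exponent
   multiplies its number of arrangements by at least [(b+1)!].  That
   multinomial coefficient counts the tuples [x] with [t_x = t^a], so the
   product is the characteristic series of a set of such tuples; the bounded
   degrees of [P] make that set finitary.  A general series is the difference
   of its positive and negative parts. *)

Lemma size_sum_count_mem (r s : seq nat) : uniq r -> {subset s <= r} ->
  size s = (\sum_(i <- r) count_mem i s)%N.
Proof.
move=> ur; elim: s => [|a s IH] sr /=; first by rewrite big1.
have ar : a \in r by apply: sr; rewrite inE eqxx.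
rewrite big_split /= -IH => [|x xs]; last by apply: sr; rewrite inE xs orbT.
rewrite (eq_bigr (fun i => if i == a then 1 else 0))%N => [|i _]; last first.
  by rewrite eq_sym; case: eqP.
by rewrite -big_mkcond sum1_count count_uniq_mem // ar.
Qed.

Lemma prod_fact_count_mem_rem (r s : seq nat) x : uniq r -> x \in r -> x \in s ->
  (\prod_(i <- r) (count_mem i s)`!)%N =
  (count_mem x s * \prod_(i <- r) (count_mem i (rem x s))`!)%N.
Proof.
move=> ur xr xs.
rewrite (bigD1_seq x xr ur) (bigD1_seq x xr ur (F := fun i => (count_mem i (rem x s))`!)) /=.
have cx_gt0 : (0 < count_mem x s)%N by rewrite -has_count has_pred1.
rewrite mulnA count_mem_rem eqxx subn1 -{1}(prednK cx_gt0) factS.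
congr (_ * _)%N; first by rewrite prednK.
apply: eq_bigr => i ix; by rewrite count_mem_rem eq_sym (negbTE ix) subn0.
Qed.

Lemma size_permutations_prod_fact (r s : seq nat) : uniq r -> {subset s <= r} ->
  (size (permutations s) * \prod_(i <- r) (count_mem i s)`!)%N = (size s)`!.
Proof.
move=> ur; move Hn: (size s) => n; elim: n s Hn => [|n IH] s Hn sr.
  by move/size0nil: Hn => ->; rewrite big1.
have s_gt0 : (0 < size s)%N by rewrite Hn.
rewrite (perm_size (permutationsE s_gt0)) size_allpairs_dep sumnE big_map big_distrl /=.
rewrite factS -Hn (size_sum_count_mem (undup_uniq s)) => [|x]; last by rewrite mem_undup.
rewrite big_distrl /=; apply: eq_big_seq => x; rewrite mem_undup => xs.
rewrite (prod_fact_count_mem_rem ur (sr _ xs) xs) mulnCA IH 1?mulnC //.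
  by rewrite size_rem // Hn.
by move=> y /mem_rem /sr.
Qed.

Lemma multinomE (s : seq nat) : multinom s = size (permutations s).
Proof.
rewrite /multinom -(@size_permutations_prod_fact (undup s)) ?undup_uniq //.
  by rewrite mulnK // prodn_gt0 // => i; apply: fact_gt0.
by move=> x; rewrite mem_undup.
Qed.

Lemma size_permutations_cat (s u : seq nat) :
  (size (permutations s) * size (permutations u) <= size (permutations (s ++ u)))%N.
Proof.
rewrite -(size_allpairs cat); apply: uniq_leq_size.
  apply: allpairs_uniq; try exact: permutations_uniq.
  move=> [a b] [c d] /allpairsP [[a' b'] /= [Ha _ [-> ->]]]
    /allpairsP [[c' d'] /= [Hc _ [-> ->]]] /= /eqP.
  rewrite eqseq_cat; last first.
    by move: Ha Hc; rewrite !mem_permutations => /perm_size -> /perm_size ->.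
  by case/andP => /eqP -> /eqP ->.
move=> t /allpairsP [[a b] /= [Ha Hb ->]].
by rewrite mem_permutations perm_cat // -mem_permutations.
Qed.

Lemma size_permutations_perm (s t : seq nat) : perm_eq s t ->
  size (permutations s) = size (permutations t).
Proof. by move=> /perm_permutations /perm_size. Qed.

Lemma leq_multinom_rem (s : seq nat) x : x \in s -> (multinom (rem x s) <= multinom s)%N.
Proof.
move=> xs; rewrite !multinomE (size_permutations_perm (perm_to_rem xs)).
rewrite -cat1s (size_permutations_perm (permEl (perm_catC [:: x] _))).
by have := size_permutations_cat (rem x s) [:: x]; rewrite muln1.
Qed.

Local Open Scope ring_scope.

Lemma is_expo_rem (s : expo) x : is_expo s -> is_expo (rem x s).
Proof. exact: (subseq_sorted leq_trans (rem_subseq x s)). Qed.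

Lemma in_R_dominated S F : in_R S ->
  (forall s, S s = 0 -> F s = 0) -> (forall s, `|F s| <= `|S s|) -> in_R F.
Proof.
case=> [S0 [d Sd] [b Sb]] FS0 FleS; split.
- by move=> s /S0 /FS0.
- by exists d => s es /(Sd s es) /FS0.
- by exists b => s es; apply: le_trans (FleS s) (Sb s es).
Qed.

Lemma in_RN S : in_R S -> in_R (fun s => - S s).
Proof. by move/in_R_dominated; apply=> s; rewrite ?normrN // => ->; rewrite oppr0. Qed.

Lemma in_R_mulT n S : in_R S -> in_R (mulT n S).
Proof.
case=> [S0 [d Sd] [b Sb]]; split.
- by move=> s /negbTE es; rewrite /mulT es.
- exists (fun i => d i + (i == n))%N => s es [m hm]; rewrite /mulT es /=.
  case: ifPn => // ns; apply: Sd; first exact: is_expo_rem.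
  by exists m; rewrite count_mem_rem ltn_subRL addnC eq_sym.
- exists b => s es; rewrite /mulT es /=; case: ifPn => [ns|_]; last by rewrite normr0.
  apply: le_trans (Sb _ (is_expo_rem _ es)) _.
  by rewrite ler_nat leq_mul2l leq_multinom_rem ?orbT.
Qed.

Lemma mulTN n S s : mulT n (fun s => - S s) s = - mulT n S s.
Proof. by rewrite /mulT; case: ifP; rewrite ?oppr0. Qed.

Lemma in_I0_ext A B : in_I0 A -> A =1 B -> in_I0 B.
Proof. by move=> [l [lR lA]] AB; exists l; split => // s; rewrite -AB. Qed.

Lemma in_I0_0 : in_I0 (fun _ => 0).
Proof. by exists [::]; split => // s; rewrite big_nil. Qed.

Lemma in_I0D A B : in_I0 A -> in_I0 B -> in_I0 (fun s => A s + B s).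
Proof.
move=> [la [laR laA]] [lb [lbR lbB]]; exists (la ++ lb); split.
- move=> i; rewrite size_cat nth_cat; case: (ltnP i (size la)) => [lt_i _|le_la_i lt_i]; first exact: laR.
  by apply: lbR; rewrite ltn_subLR.
- by move=> s; rewrite big_cat laA lbB.
Qed.

Lemma in_I0N A : in_I0 A -> in_I0 (fun s => - A s).
Proof.
move=> [l [lR lA]]; exists (map (fun p => (p.1, fun s => - p.2 s)) l); split.
- move=> i; rewrite size_map => lt_i; rewrite (nth_map (0%N, fun _ => 0)) //=.
  exact: in_RN (lR _ lt_i).
- by move=> s; rewrite big_map lA -sumrN; apply: eq_bigr => p _ /=; rewrite mulTN opprD.
Qed.

Lemma in_I0_mulT n S : in_R S -> in_I0 (fun s => mulT n S s - S s).
Proof. by move=> SR; exists [:: (n, S)]; split => [[]|s] //; rewrite big_seq1. Qed.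

Fixpoint mulT_iota (k : nat) (S : series) : series :=
  if k is k'.+1 then mulT k' (mulT_iota k' S) else S.

Lemma in_R_mulT_iota k S : in_R S -> in_R (mulT_iota k S).
Proof. by move=> SR; elim: k => [|k IH] //=; apply: in_R_mulT. Qed.

Lemma in_I0_sub_mulT_iota k S : in_R S -> in_I0 (fun s => S s - mulT_iota k S s).
Proof.
move=> SR; elim: k => [|k IH].
  by apply: in_I0_ext in_I0_0 _ => s /=; rewrite subrr.
apply: in_I0_ext (in_I0D IH (in_I0N (in_I0_mulT k (in_R_mulT_iota k SR)))) _ => s /=.
by rewrite opprB addrA subrK.
Qed.

Lemma mulT_iota_ge0 k S : (forall s, 0 <= S s) -> forall s, 0 <= mulT_iota k S s.
Proof. by move=> S_ge0; elim: k => [|k IH] s //=; rewrite /mulT; case: ifP. Qed.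

Lemma mulT_iota_supp k S s : mulT_iota k S s != 0 ->
  exists2 s', perm_eq s (s' ++ iota 0 k) & mulT_iota k S s = S s'.
Proof.
elim: k s => [|k IH] s /=; first by exists s; rewrite ?cats0.
rewrite /mulT; case: ifP => [/andP [_ ks] /IH [s' s's ->]|]; last by rewrite eqxx.
exists s' => //; apply: perm_trans (perm_to_rem ks) _.
by rewrite -[0%N :: _]/(iota 0 k.+1) -addn1 iotaD catA cats1 perm_sym perm_rcons perm_cons perm_sym.
Qed.

Lemma mulT_iota_le_size_permutations k b S :
  (forall s, ~~ is_expo s -> S s = 0) ->
  (forall s, is_expo s -> `|S s| <= (b * multinom s)%:R) -> (b <= k`!)%N ->
  forall s, `|mulT_iota k S s| <= (size (permutations s))%:R.
Proof.
move=> S0 Sb le_b_k s.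
have [->|/mulT_iota_supp [s' s's ->]] := eqVneq (mulT_iota k S s) 0.
  by rewrite normr0.
have [es'|/S0 ->] := boolP (is_expo s'); last by rewrite normr0.
apply: le_trans (Sb _ es') _; rewrite ler_nat multinomE (size_permutations_perm s's).
apply: leq_trans (size_permutations_cat s' (iota 0 k)).
by rewrite (size_permutations (iota_uniq 0 k)) size_iota mulnC leq_mul2l le_b_k orbT.
Qed.

Definition perm_prefixes (Q : series) : pred (seq nat) :=
  fun x => x \in take `|Q (sort leq x)|%N (permutations (sort leq x)).

Lemma count_mem_take (T : eqType) (l : seq T) q : uniq l ->
  count (mem (take q l)) l = size (take q l).
Proof.
move=> ul; rewrite -[X in count _ X](cat_take_drop q l) count_cat.
have -> : count (mem (take q l)) (drop q l) = 0%N.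
  apply/eqP; rewrite -leqn0 leqNgt -has_count.
  by move: ul; rewrite -{1}(cat_take_drop q l) cat_uniq => /and3P [].
by rewrite addn0; apply/eqP; rewrite -all_count; apply/allP.
Qed.

Lemma charser_perm_prefixes Q : (forall s, ~~ is_expo s -> Q s = 0) ->
  (forall s, 0 <= Q s <= (size (permutations s))%:R) ->
  charser (perm_prefixes Q) =1 Q.
Proof.
move=> Q0 Qbound s; rewrite /charser; case: ifPn => [es|/Q0 -> //].
have /andP [Q_ge0 Q_le] := Qbound s.
rewrite (@eq_in_count _ _ (mem (take `|Q s|%N (permutations s)))) => [|t].
  rewrite count_mem_take ?permutations_uniq // size_takel ?gez0_abs //.
  by rewrite -(ler_nat int) natz gez0_abs.
rewrite mem_permutations => ts; rewrite /perm_prefixes.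
suff -> : sort leq t = s by [].
apply: (sorted_eq leq_trans anti_leq (sort_sorted leq_total t) es).
by rewrite perm_sort.
Qed.

Lemma in_W_of_support Q (X : pred (seq nat)) : in_R Q -> Q [::] = 0 ->
  (forall x, X x -> Q (sort leq x) != 0) -> in_W X.
Proof.
case=> [_ [d Qd] _] Q_nil XQ; split=> [[|//] /XQ|n]; first by rewrite Q_nil eqxx.
exists (\sum_(i <- iota 0 n.+1) d i)%N => x /XQ Qx x_le_n.
have count_le_d i : (count_mem i (sort leq x) <= d i)%N.
  rewrite leqNgt; apply/negP => d_lt; move: Qx.
  by rewrite (Qd _ (sort_sorted leq_total x)) ?eqxx //; exists i.
rewrite -(size_sort leq x) (size_sum_count_mem (iota_uniq 0 n.+1)).
  by apply: leq_sum => i _.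
by move=> i; rewrite mem_sort mem_iota add0n ltnS => /(allP x_le_n).
Qed.

Lemma nonneg_series_congr_charser P : in_R P -> (forall s, 0 <= P s) ->
  exists X, in_W X /\ in_I0 (fun s => P s - charser X s).
Proof.
move=> PR P_ge0; have [P0 _ [b Pb]] := PR.
pose Q := mulT_iota b.+1 P.
have QR : in_R Q := in_R_mulT_iota b.+1 PR.
have Q_le s : Q s <= (size (permutations s))%:R.
  apply: le_trans (ler_norm _) _.
  exact: (mulT_iota_le_size_permutations P0 Pb (ltnW (fact_geq b.+1))).
have XQ : charser (perm_prefixes Q) =1 Q.
  apply: charser_perm_prefixes => [|s]; first by case: QR.
  by rewrite Q_le mulT_iota_ge0.
exists (perm_prefixes Q); split.
  apply: (in_W_of_support QR) => [|x]; first by rewrite /Q /= /mulT.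
  by rewrite /perm_prefixes; apply: contraTneq => ->; rewrite take0.
by apply: in_I0_ext (in_I0_sub_mulT_iota b.+1 PR) _ => s; rewrite XQ.
Qed.

Lemma in_R_split_nonneg S : in_R S -> exists P N : series,
  [/\ in_R P, in_R N, (forall s, 0 <= P s), (forall s, 0 <= N s) &
      forall s, S s = P s - N s].
Proof.
move=> SR; exists (fun s => Num.max (S s) 0), (fun s => Num.max (- S s) 0).
split=> [||s|s|s]; rewrite ?le_max ?lexx ?orbT //.
- apply: (in_R_dominated SR) => s; first by move=> ->; rewrite maxxx.
  by case: (leP (S s) 0); rewrite ?normr0.
- apply: (in_R_dominated SR) => s; first by move=> ->; rewrite oppr0 maxxx.
  by case: (leP (- S s) 0); rewrite ?normr0 ?normrN.
- by case: (leP (S s) 0); case: (leP (- S s) 0) => *; lra.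
Qed.

Theorem lemma1p11 :
  (forall P : series, in_Rplus P ->
     exists X : pred (seq nat), in_W X /\ in_I0 (fun s => P s - charser X s))
  /\
  (forall S : series, in_R S ->
     exists (X Y : pred (seq nat)) (S0 : series),
       [/\ in_W X, in_W Y, in_I0 S0 &
           forall s, S s = charser X s - charser Y s + S0 s]).
Proof.
split=> [P [PR _ P_ge0]|S SR]; first exact: nonneg_series_congr_charser.
have [P [N [PR NR P_ge0 N_ge0 SPN]]] := in_R_split_nonneg SR.
have [X [WX IX]] := nonneg_series_congr_charser PR P_ge0.
have [Y [WY IY]] := nonneg_series_congr_charser NR N_ge0.
exists X, Y, (fun s => (P s - charser X s) + - (N s - charser Y s)); split => //.
  exact: in_I0D IX (in_I0N IY).
by move=> s; rewrite SPN; ring.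
Qed.
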